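(* Let $C>1$ be a constant such that for every real $Z>0$ and every cubic field $K$ with $|\Delta(K)|\le Z$, the set $S_K(CZ^{1/4})$ is nonempty. Let $X,Y>0$ be real numbers with $Y\geq CX^{1/4}$, and let $K$ be a cubic field with $X/2\leq|\Delta(K)|\leq X$. Then \[ \#S_K(Y)/\#S_K(CX^{1/4})\ll Y^2/X^{1/2}, \] where the implied constant is independent of $X$, $Y$, and $K$.
   Context: For a cubic field $K$ with ring of integers $\mathcal{O}_K$ and discriminant $\Delta(K)$, an element $\alpha\in\mathcal{O}_K$ is reduced if its trace lies in $\{-1,0,1\}$; $|\alpha|_\infty=\max_{v\mid\infty}|\alpha|_v$ (maximum of $|\tau(\alpha)|$ over complex embeddings $\tau$); for $Y>0$, $S_K(Y)$ is the set of reduced $\alpha\in\mathcal{O}_K\setminus\mathbb{Z}$ with $|\alpha|_\infty<Y$. *)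

From mathcomp Require Import all_boot all_order all_algebra.
From mathcomp Require Import reals exp complex.
Set Implicit Arguments. Unset Strict Implicit. Unset Printing Implicit Defensive.
Import Order.TTheory GRing.Theory Num.Theory.
Local Open Scope ring_scope.

(* A cubic field K is presented as Q[x]/(p) for a monic irreducible p in Q[x]
   of degree 3 (every cubic field arises this way).  Elements of K are
   represented by their reduced representatives f : {poly rat} with
   size f <= 3 (i.e. deg f <= 2); alpha = f(theta), theta = class of x. *)

Definition cubic_poly (p : {poly rat}) : Prop :=
  p \is monic /\ size p = 4%N /\ irreducible_poly p.

Definition inK (f : {poly rat}) : Prop := (size f <= 3)%N.

Definition mulK (p f g : {poly rat}) : {poly rat} := (f * g) %% p.

(* Trace Tr_{K/Q}(alpha): trace of the Q-linear map "multiplication by alpha"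
   on K in the basis 1, theta, theta^2. *)
Definition traceK (p f : {poly rat}) : rat :=
  \sum_(i < 3) ((f * 'X^i) %% p)`_i.

(* alpha lies in O_K: alpha is a root of a monic polynomial with integer
   coefficients, i.e. q(alpha) = 0 in K. *)
Definition in_OK (p f : {poly rat}) : Prop :=
  inK f /\ exists q : {poly int}, q \is monic /\
    p %| (map_poly (intr : int -> rat) q) \Po f.

Definition in_Z (f : {poly rat}) : Prop := exists k : int, f = (k%:~R)%:P.

Definition reduced (p f : {poly rat}) : Prop :=
  traceK p f = -1 \/ traceK p f = 0 \/ traceK p f = 1.

(* |alpha|_infty < Y : for every complex embedding tau (theta |-> z, z a complex
   root of p), |tau(alpha)| < Y.  Since the embeddings are finitely many, this
   is exactly "max_tau |tau(alpha)| < Y". *)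
Definition abs_inf_lt (R : realType) (p f : {poly rat}) (Y : R) : Prop :=
  forall z : R[i], root (map_poly (ratr : rat -> R[i]) p) z ->
    `|(map_poly (ratr : rat -> R[i]) f).[z]| < real_complex R Y.

Definition S_K (R : realType) (p : {poly rat}) (Y : R) (f : {poly rat}) : Prop :=
  in_OK p f /\ ~ in_Z f /\ reduced p f /\ abs_inf_lt p f Y.

Definition card_is (P : {poly rat} -> Prop) (n : nat) : Prop :=
  exists s : seq {poly rat}, uniq s /\ (forall f, f \in s <-> P f) /\ size s = n.

Definition is_disc (p : {poly rat}) (d : int) : Prop :=
  exists w : 'I_3 -> {poly rat},
    (forall i, in_OK p (w i)) /\
    (forall c : 'I_3 -> rat, \sum_i c i *: w i = 0 -> forall i, c i = 0) /\
    (forall f, in_OK p f -> exists k : 'I_3 -> int, f = \sum_i (k i)%:~R *: w i) /\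
    d%:~R = \det (\matrix_(i < 3, j < 3) traceK p (mulK p (w i) (w j))).

From mathcomp Require Import all_boot all_order all_algebra all_field.
From mathcomp Require Import reals exp complex boolp.
From mathcomp Require Import ring lra zify.
Import Order.TTheory GRing.Theory Num.Theory.
Import ComplexField.Normc.

Set Implicit Arguments.
Unset Strict Implicit.
Unset Printing Implicit Defensive.
Local Open Scope ring_scope.

(* Put r = C X^(1/4) and s = r / 2.  Give every element of K two real
   coordinates: its values at two real embeddings, or the real and imaginary
   parts of its value at a complex embedding.  Label each alpha in S_K(Y) by
   its trace (in {-1, 0, 1}) and by the integer parts of its coordinates
   divided by s; there are 3 (2K + 1)^2 labels with K ~ 2Y / r.  Two elements
   with the same label differ by an element of trace 0 whose coordinates are
   smaller than s; as its three conjugates sum to 0, all of them are smaller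
   than 2 s = r, so the difference lies in S_K(r).  Hence a label class has at
   most #S_K(r) + 1 elements, and #S_K(r) >= 1 by hypothesis, which gives
   #S_K(Y) / #S_K(r) <= 294 (Y / r)^2 <= 294 Y^2 / X^(1/2).
   Each S_K(Y) is finite: the coefficients of elements of O_K have a common
   denominator (read off a Z-basis), and by Lagrange interpolation they are
   bounded in terms of the conjugates. *)

Definition quad {R : nzRingType} (a b c : R) : {poly R} := Poly [:: a; b; c].

Lemma quadE (R : comNzRingType) (a b c : R) :
  quad a b c = a%:P + b%:P * 'X + c%:P * 'X^2.
Proof. rewrite /quad /= !cons_poly_def mul0r add0r; ring. Qed.

Lemma coef_quad (R : nzRingType) (a b c : R) :
  [/\ (quad a b c)`_0 = a, (quad a b c)`_1 = b & (quad a b c)`_2 = c].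
Proof. by rewrite /quad !coef_Poly. Qed.

Lemma size_quad (R : nzRingType) (a b c : R) : (size (quad a b c) <= 3)%N.
Proof. exact: size_Poly. Qed.

Lemma quad_coef (R : nzRingType) (f : {poly R}) :
  (size f <= 3)%N -> f = quad f`_0 f`_1 f`_2.
Proof.
move=> f_small; apply/polyP => i; rewrite coef_Poly.
case: i => [|[|[|i]]] //=; rewrite nth_nil nth_default //.
exact: leq_trans f_small _.
Qed.

Lemma quad_inj (R : nzRingType) (a b c a' b' c' : R) :
  quad a b c = quad a' b' c' -> [/\ a = a', b = b' & c = c'].
Proof.
move=> E; have [a0 b1 c2] := coef_quad a b c.
have [a0' b1' c2'] := coef_quad a' b' c'.
by split; [rewrite -a0 -a0' | rewrite -b1 -b1' | rewrite -c2 -c2']; rewrite E.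
Qed.

Lemma horner_quad (R : comNzRingType) (a b c x : R) :
  (quad a b c).[x] = a + b * x + c * x ^+ 2.
Proof. by rewrite quadE !hornerE. Qed.

Lemma map_quad (R S : comNzRingType) (g : {rmorphism R -> S}) (a b c : R) :
  map_poly g (quad a b c) = quad (g a) (g b) (g c).
Proof.
by rewrite !quadE !(rmorphD, rmorphM, rmorphXn) /= !(map_polyC, map_polyX).
Qed.

Lemma monic_cubicE (R : nzRingType) (p : {poly R}) :
  p \is monic -> size p = 4%N -> p = 'X^3 + quad p`_0 p`_1 p`_2.
Proof.
move=> /monicP lead_p size_p; apply/polyP => i.
have p3 : p`_3 = 1 by rewrite -lead_p /lead_coef size_p.
rewrite coefD coefXn coef_Poly.
by case: i => [|[|[|[|i]]]] /=; rewrite ?add0r ?addr0 // nth_default ?size_p.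
Qed.

Lemma size_cubic (R : nzRingType) (a b c : R) : size ('X^3 + quad a b c) = 4%N.
Proof.
by rewrite size_addl ?size_polyXn // (leq_ltn_trans (size_quad _ _ _)) ?size_polyXn.
Qed.

Lemma traceK_quad (p0 p1 p2 a b c : rat) :
  traceK ('X^3 + quad p0 p1 p2) (quad a b c) =
  3 * a - b * p2 + c * (p2 ^+ 2 - 2 * p1).
Proof.
set p := 'X^3 + quad p0 p1 p2.
have small (u v w : rat) : (size (quad u v w) < size p)%N.
  by rewrite size_cubic ltnS size_quad.
rewrite /traceK !big_ord_recl big_ord0 /= addr0 expr0 mulr1.
have -> : quad a b c * 'X^1 =
    c%:P * p + quad (- (c * p0)) (a - c * p1) (b - c * p2).
  by rewrite /p !quadE !polyCN !polyCB !polyCM; ring.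
set b' := b - c * p2.
have -> : quad a b c * 'X^2 = (c%:P * 'X + b'%:P) * p +
    quad (- (b' * p0)) (- (c * p0) - b' * p1) (a - c * p1 - b' * p2).
  by rewrite /p /b' !quadE !polyCN !polyCB !polyCM; ring.
rewrite modp_small ?modp_addl_mul_small // /bump /=.
have [-> _ _] := coef_quad a b c.
have [_ -> _] := coef_quad (- (c * p0)) (a - c * p1) (b - c * p2).
have [_ _ ->] := coef_quad (- (b' * p0)) (- (c * p0) - b' * p1) (a - c * p1 - b' * p2).
rewrite /b'; ring.
Qed.

Lemma traceK_sum_roots (F : numFieldType) (p f : {poly rat}) (z1 z2 z3 : F) :
  p \is monic -> size p = 4%N -> (size f <= 3)%N ->
  map_poly ratr p = \prod_(z <- [:: z1; z2; z3]) ('X - z%:P) ->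
  ratr (traceK p f) =
  (map_poly ratr f).[z1] + (map_poly ratr f).[z2] + (map_poly ratr f).[z3].
Proof.
move=> monic_p size_p f_small.
rewrite (monic_cubicE monic_p size_p) (quad_coef f_small) traceK_quad.
rewrite rmorphD /= map_quad map_polyXn !big_cons big_nil mulr1.
move: (p`_0) (p`_1) (p`_2) => p0 p1 p2.
have -> : ('X - z1%:P) * (('X - z2%:P) * ('X - z3%:P)) = 'X^3 +
    quad (- (z1 * z2 * z3)) (z1 * z2 + z1 * z3 + z2 * z3) (- (z1 + z2 + z3)).
  by rewrite quadE !polyCN !polyCD !polyCM; ring.
move/addrI/quad_inj => [_ p1E p2E].
rewrite !map_quad !horner_quad.
rewrite !(rmorphD, rmorphB, rmorphN, rmorphM, rmorphXn, rmorph_nat) /= p1E p2E.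
ring.
Qed.

Lemma traceKB (p f g : {poly rat}) : traceK p (f - g) = traceK p f - traceK p g.
Proof.
rewrite /traceK -sumrB; apply: eq_bigr => i _.
by rewrite mulrBl modpD modpN coefD coefN.
Qed.

Lemma traceK_polyC (p : {poly rat}) (k : rat) :
  p \is monic -> size p = 4%N -> traceK p k%:P = 3 * k.
Proof.
move=> monic_p size_p; rewrite (monic_cubicE monic_p size_p).
have -> : k%:P = quad k 0 0 by rewrite quadE !mul0r !addr0.
by rewrite traceK_quad; ring.
Qed.

Lemma cubic_poly_separable (p : {poly rat}) : cubic_poly p -> separable_poly p.
Proof.
move=> [/monicP lead_p [size_p irr_p]].
have dp_neq0 : p^`() != 0.
  apply: contraTneq isT => /(congr1 (fun q : {poly rat} => q`_2)).
  by rewrite coef_deriv coef0 [p`_3](_ : _ = 1) // -lead_p /lead_coef size_p.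
rewrite separable_poly.unlock /coprimep; apply/negPn/negP => gcd_nonconst.
have /andP [_ p_dvd_gcd] := irr_p _ gcd_nonconst (dvdp_gcdl p p^`()).
have /(dvdp_leq dp_neq0) := dvdp_trans p_dvd_gcd (dvdp_gcdr p p^`()).
by rewrite leqNgt lt_size_deriv ?irredp_neq0.
Qed.

Lemma cubic_poly_factor (F : numClosedFieldType) (p : {poly rat}) :
  cubic_poly p -> exists z1 z2 z3 : F,
    map_poly ratr p = \prod_(z <- [:: z1; z2; z3]) ('X - z%:P) /\
    uniq [:: z1; z2; z3].
Proof.
move=> cubic_p; have [/monicP lead_p [size_p _]] := cubic_p.
have [r Er] := closed_field_poly_normal (map_poly (ratr : rat -> F) p).
rewrite lead_coef_map lead_p rmorph1 scale1r in Er.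
have sep : separable_poly (map_poly (ratr : rat -> F) p).
  move: (cubic_poly_separable cubic_p).
  by rewrite !separable_poly.unlock deriv_map coprimep_map.
have : size r = 3%N.
  by have := size_prod_XsubC r id; rewrite -Er size_map_poly size_p; case.
case: r Er => [|z1 [|z2 [|z3 []]]] // Er _.
by exists z1, z2, z3; rewrite -separable_prod_XsubC -Er.
Qed.

Lemma dvdp_irreducible_common_root (F : numFieldType) (p g : {poly rat}) (z : F) :
  irreducible_poly p -> root (map_poly ratr p) z -> root (map_poly ratr g) z ->
  p %| g.
Proof.
move=> irr_p pz gz.
have gcd_root : root (map_poly (ratr : rat -> F) (gcdp p g)) z.
  by rewrite gcdp_map root_gcd pz gz.
have : size (gcdp p g) != 1%N.
  apply: contraTneq gcd_root => /eqP/size_poly1P [c c_neq0 ->].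
  by rewrite map_polyC rootC fmorph_eq0.
move=> /irr_p /(_ (dvdp_gcdl p g)) /andP [_ /dvdp_trans]; apply.
exact: dvdp_gcdr.
Qed.

Lemma horner_map_int_comp (F : numFieldType) (q : {poly int}) (f : {poly rat}) (x : F) :
  (map_poly ratr (map_poly intr q \Po f)).[x] =
  (map_poly intr q).[(map_poly ratr f).[x]].
Proof.
rewrite map_comp_poly horner_comp -map_poly_comp.
by congr (_.[_]); apply: eq_map_poly => b /=; rewrite rmorph_int.
Qed.

Lemma in_OK_Aint (p f : {poly rat}) (z : algC) :
  root (map_poly ratr p) z -> in_OK p f -> (map_poly ratr f).[z] \in Aint.
Proof.
move=> pz [_ [q [monic_q /dvdpP [r Er]]]].
apply: (@root_monic_Aint (map_poly intr q)); last first.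
- by apply/polyOverP => i; rewrite coef_map /= rpred_int.
- exact: monic_map.
by rewrite /root -horner_map_int_comp Er rmorphM /= hornerM (eqP pz) mulr0.
Qed.

Lemma Aint_in_OK (p f : {poly rat}) (z : algC) :
  irreducible_poly p -> root (map_poly ratr p) z -> inK f ->
  (map_poly ratr f).[z] \in Aint -> in_OK p f.
Proof.
move=> irr_p pz f_small /floorpP [q Eq]; split => //; exists q; split.
  have [m [Em monic_m] _] := minCpolyP (map_poly ratr f).[z].
  have /monicP : map_poly (intr : int -> algC) q \is monic.
    by rewrite -Eq Em map_monic.
  rewrite lead_coef_map_inj //; last exact: intr_inj.
  by move=> lead_q; apply/monicP/eqP; rewrite -(eqr_int algC) lead_q.
apply: (dvdp_irreducible_common_root irr_p pz).
by rewrite /root horner_map_int_comp -Eq; exact: root_minCpoly.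
Qed.

Lemma in_OKB (p f g : {poly rat}) :
  cubic_poly p -> in_OK p f -> in_OK p g -> in_OK p (f - g).
Proof.
move=> [_ [size_p irr_p]] OK_f OK_g.
have [z pz] : exists z : algC, root (map_poly ratr p) z.
  by apply/closed_rootP; rewrite size_map_poly size_p.
apply: (Aint_in_OK irr_p pz).
  rewrite /inK (leq_trans (size_add _ _)) // size_opp geq_max.
  by rewrite OK_f.1 OK_g.1.
by rewrite rmorphB hornerD hornerN rpredB ?(in_OK_Aint pz).
Qed.

Lemma common_denominator (s : seq rat) :
  exists D : int, 0 < D /\ forall x, x \in s -> D%:~R * x \is a Num.int.
Proof.
elim: s => [|x s [D [D_gt0 Ds]]]; first by exists 1.
exists (denq x * D); split; first by rewrite mulr_gt0.
move=> y; rewrite inE => /orP [/eqP -> | ys].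
  by rewrite intrM mulrAC [_ * x]mulrC -numqE rpredM ?rpred_int.
by rewrite intrM -mulrA rpredM ?rpred_int ?Ds.
Qed.

Lemma in_OK_common_denominator (p : {poly rat}) (d : int) : is_disc p d ->
  exists D : int, 0 < D /\
    forall f, in_OK p f -> forall k, (k < 3)%N -> D%:~R * f`_k \is a Num.int.
Proof.
move=> [w [OK_w [_ [span_w _]]]].
have [D [D_gt0 Dw]] := common_denominator
  [seq (w i)`_k | i <- enum 'I_3, k <- iota 0 3].
exists D; split => // f /span_w [c ->] k k_lt3.
rewrite coef_sum mulr_sumr rpred_sum // => i _.
rewrite coefZ mulrCA rpredM ?rpred_int // Dw //.
by apply: allpairs_f; rewrite ?mem_enum ?mem_iota.
Qed.

Lemma perm3_complete (T : eqType) (s : seq T) (a b : T) :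
  size s = 3%N -> a \in s -> b \in s -> b != a ->
  exists v, perm_eq [:: a; b; v] s.
Proof.
move=> size_s a_s b_s ba.
have pa := perm_to_rem a_s.
have b_rem : b \in rem a s by move: b_s; rewrite (perm_mem pa) inE (negPf ba).
have pb := perm_to_rem b_rem.
have : size (rem b (rem a s)) = 1%N by rewrite !size_rem ?size_s.
case E : (rem b (rem a s)) => [|v []] // _; exists v.
by rewrite perm_sym (perm_trans pa) // perm_cons -E.
Qed.

Section ComplexEmbeddings.
Local Open Scope complex_scope.
Variable R : realType.
Implicit Types (a z : R[i]) (f p : {poly rat}).

Local Notation Re := (@complex.Re R).
Local Notation Im := (@complex.Im R).
Local Notation ev f z := (map_poly ratr f).[z].

Lemma ltc_normc a (Y : R) : (`|a| < Y%:C) = (normc a < Y).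
Proof. by rewrite normc_def ltcR; case: a. Qed.

Lemma lec_normc (a : R[i]) (Y : R) : (`|a| <= Y%:C) = (normc a <= Y).
Proof. by rewrite normc_def lecR; case: a. Qed.

Lemma normc_Re a : `|Re a| <= normc a.
Proof.
case: a => x y /=; rewrite -sqrtr_sqr ler_sqrt ?addr_ge0 ?sqr_ge0 //.
by rewrite lerDl sqr_ge0.
Qed.

Lemma normc_Im a : `|Im a| <= normc a.
Proof.
case: a => x y /=; rewrite -sqrtr_sqr ler_sqrt ?addr_ge0 ?sqr_ge0 //.
by rewrite lerDr sqr_ge0.
Qed.

Lemma normc_le_Re_Im a : normc a <= `|Re a| + `|Im a|.
Proof.
case: a => x y /=.
have xy_ge0 : 0 <= `|x| + `|y| by rewrite addr_ge0.
rewrite -(ger0_norm xy_ge0) -sqrtr_sqr ler_sqrt ?sqr_ge0 //.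
rewrite sqrrD -[x ^+ 2]real_normK ?num_real // -[y ^+ 2]real_normK ?num_real //.
by rewrite lerD2r lerDl mulrn_wge0 // mulr_ge0.
Qed.

Lemma normc_real a : Im a = 0 -> normc a = `|Re a|.
Proof. by case: a => x y /= ->; rewrite expr0n /= addr0 sqrtr_sqr. Qed.

Lemma normc_real_complex (x : R) : normc x%:C = `|x|.
Proof. exact: normc_real. Qed.

Lemma normc_conjc a : normc (conjc a) = normc a.
Proof. by case: a => x y /=; rewrite sqrrN. Qed.

Lemma Re_conjc a : Re (conjc a) = Re a.
Proof. by case: a. Qed.

Lemma Im_conjc_fixed a : conjc a = a -> Im a = 0.
Proof. by case: a => x y [] /=; lra. Qed.

Lemma conjc_horner_rat f z : conjc (ev f z) = ev f (conjc z).
Proof.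
rewrite -(horner_map (conjc : {rmorphism R[i] -> R[i]})) -map_poly_comp.
congr (_.[_]); apply: eq_map_poly => t /=.
exact: (fmorph_rat (conjc : {rmorphism R[i] -> R[i]})).
Qed.

Lemma Im_horner_rat f z : Im z = 0 -> Im (ev f z) = 0.
Proof.
move=> Im_z; apply: Im_conjc_fixed; rewrite conjc_horner_rat.
congr (_.[_]).
by case: z Im_z => x y /= ->; rewrite oppr0.
Qed.

Lemma conj_pair_third_real a v :
  uniq [:: a; conjc a; v] -> conjc v \in [:: a; conjc a; v] -> Im v = 0.
Proof.
move=> uniq_s; rewrite !inE => /or3P [] /eqP vJ; last exact: Im_conjc_fixed.
  by move: uniq_s; rewrite -vJ conjcK /= !inE eqxx /= !andbF.
by move: uniq_s; rewrite (can_inj (@conjcK R) vJ) /= !inE eqxx orbT.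
Qed.

Lemma conj_stable_triple (z1 z2 z3 : R[i]) :
  uniq [:: z1; z2; z3] ->
  (forall z, z \in [:: z1; z2; z3] -> conjc z \in [:: z1; z2; z3]) ->
  exists u1 u2 u3, perm_eq [:: u1; u2; u3] [:: z1; z2; z3] /\
    Im u1 = 0 /\ (Im u2 = 0 /\ Im u3 = 0 \/ u3 = conjc u2).
Proof.
move=> uniq_z conj_z.
have [/hasP [a a_z Im_a] | /hasPn real_z] :=
  boolP (has (fun z => Im z != 0) [:: z1; z2; z3]).
  have aJ_neq : conjc a != a by apply: contra Im_a => /eqP /Im_conjc_fixed ->.
  have [v pv] :=
    perm3_complete (s := [:: z1; z2; z3]) erefl a_z (conj_z a a_z) aJ_neq.
  exists v, a, (conjc a); split; first by rewrite -(perm_rot 1 [:: v; a; conjc a]).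
  split; last by right.
  apply: (@conj_pair_third_real a); first by rewrite (perm_uniq pv).
  by rewrite (perm_mem pv) conj_z // -(perm_mem pv) !inE eqxx !orbT.
exists z1, z2, z3; split => //.
by split; last left; [|split]; apply/eqP/negbNE/real_z; rewrite !inE eqxx ?orbT.
Qed.

Lemma cubic_roots_real_or_conj p : cubic_poly p ->
  exists u1 u2 u3 : R[i],
    map_poly ratr p = \prod_(z <- [:: u1; u2; u3]) ('X - z%:P) /\
    Im u1 = 0 /\ (Im u2 = 0 /\ Im u3 = 0 \/ u3 = conjc u2).
Proof.
move=> cubic_p; have [z1 [z2 [z3 [Ep uniq_z]]]] := cubic_poly_factor (R[i]) cubic_p.
have conj_z z : z \in [:: z1; z2; z3] -> conjc z \in [:: z1; z2; z3].
  by rewrite -!root_prod_XsubC -Ep /root -conjc_horner_rat => /eqP ->; rewrite conjc0.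
have [u1 [u2 [u3 [pu roots_u]]]] := conj_stable_triple uniq_z conj_z.
by exists u1, u2, u3; split=> //; rewrite Ep; apply: perm_big; rewrite perm_sym.
Qed.

Lemma abs_inf_ltE p (u1 u2 u3 : R[i]) f (Y : R) :
  map_poly ratr p = \prod_(z <- [:: u1; u2; u3]) ('X - z%:P) ->
  abs_inf_lt p f Y <->
  [/\ normc (ev f u1) < Y, normc (ev f u2) < Y & normc (ev f u3) < Y].
Proof.
rewrite /abs_inf_lt => ->; split => [lt_Y | [lt1 lt2 lt3] z].
  by rewrite -!ltc_normc; split; apply: lt_Y;
    rewrite root_prod_XsubC !inE eqxx ?orbT.
by rewrite root_prod_XsubC !inE ltc_normc => /or3P [] /eqP ->.
Qed.

Lemma normc_sum0_real (a1 a2 a3 : R[i]) (s : R) :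
  Im a1 = 0 -> Im a2 = 0 -> Im a3 = 0 -> a1 + a2 + a3 = 0 ->
  `|Re a1| < s -> `|Re a2| < s ->
  [/\ normc a1 < 2 * s, normc a2 < 2 * s & normc a3 < 2 * s].
Proof.
move=> Im1 Im2 Im3 /(congr1 Re); rewrite !raddfD /= => sum0 lt1 lt2.
rewrite !normc_real //.
have Re3 : Re a3 = - (Re a1 + Re a2) by lra.
have := ler_normD (Re a1) (Re a2); have := normr_ge0 (Re a1).
by rewrite Re3 normrN; split; lra.
Qed.

Lemma normc_sum0_conj (a1 a2 : R[i]) (s : R) :
  Im a1 = 0 -> a1 + a2 + conjc a2 = 0 -> `|Re a2| < s -> `|Im a2| < s ->
  [/\ normc a1 < 2 * s, normc a2 < 2 * s & normc (conjc a2) < 2 * s].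
Proof.
move=> Im1 /(congr1 Re); rewrite !raddfD /= => sum0 lt_Re lt_Im.
have lt2 : normc a2 < 2 * s by have := normc_le_Re_Im a2; lra.
rewrite normc_conjc normc_real //; split => //.
rewrite Re_conjc in sum0; have -> : Re a1 = - (2 * Re a2) by lra.
by rewrite normrN normrM ger0_norm //; lra.
Qed.

Lemma trace_coordinates p : cubic_poly p ->
  exists cx cy : {poly rat} -> R,
    [/\ {morph cx : f g / f - g}, {morph cy : f g / f - g},
      (forall f (Y : R), abs_inf_lt p f Y -> `|cx f| < Y /\ `|cy f| < Y) &
      (forall f (s : R), inK f -> traceK p f = 0 -> `|cx f| < s -> `|cy f| < s ->
         abs_inf_lt p f (2 * s))].
Proof.
move=> cubic_p; have [monic_p [size_p _]] := cubic_p.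
have [u1 [u2 [u3 [Ep [Im_u1 real_or_conj]]]]] := cubic_roots_real_or_conj cubic_p.
have evB f g z : ev (f - g) z = ev f z - ev g z.
  by rewrite rmorphB hornerD hornerN.
have sum0 f : inK f -> traceK p f = 0 -> ev f u1 + ev f u2 + ev f u3 = 0.
  by move=> /(traceK_sum_roots monic_p size_p)/(_ Ep) <- ->; rewrite rmorph0.
case: real_or_conj => [[Im_u2 Im_u3] | u3E].
  exists (fun f => Re (ev f u1)), (fun f => Re (ev f u2)).
  split=> [f g | f g | f Y /(abs_inf_ltE _ _ Ep) [lt1 lt2 _] | f s f_small tr0 lt1 lt2].
  - by rewrite evB raddfB.
  - by rewrite evB raddfB.
  - by split; apply: le_lt_trans (normc_Re _) _.
  apply/(abs_inf_ltE _ _ Ep)/normc_sum0_real; rewrite ?Im_horner_rat //.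
  exact: sum0.
rewrite {}u3E in Ep sum0.
exists (fun f => Re (ev f u2)), (fun f => Im (ev f u2)).
split=> [f g | f g | f Y /(abs_inf_ltE _ _ Ep) [_ lt2 _] | f s f_small tr0 lt1 lt2].
- by rewrite evB raddfB.
- by rewrite evB raddfB.
- by split; [apply: le_lt_trans (normc_Re _) _ | apply: le_lt_trans (normc_Im _) _].
have sumJ0 : ev f u1 + ev f u2 + conjc (ev f u2) = 0.
  by rewrite conjc_horner_rat; exact: sum0.
have [lt1' lt2' lt3'] := normc_sum0_conj (Im_horner_rat f Im_u1) sumJ0 lt1 lt2.
by apply/(abs_inf_ltE _ _ Ep); rewrite -conjc_horner_rat.
Qed.

End ComplexEmbeddings.

Lemma lagrange3 (F : fieldType) (z1 z2 z3 c0 c1 c2 : F) :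
  uniq [:: z1; z2; z3] ->
  let v z := c0 + c1 * z + c2 * z ^+ 2 in
  let D1 := (z1 - z2) * (z1 - z3) in
  let D2 := (z2 - z1) * (z2 - z3) in
  let D3 := (z3 - z1) * (z3 - z2) in
  [/\ c0 = z2 * z3 / D1 * v z1 + z1 * z3 / D2 * v z2 + z1 * z2 / D3 * v z3,
      c1 = - (z2 + z3) / D1 * v z1 - (z1 + z3) / D2 * v z2 - (z1 + z2) / D3 * v z3 &
      c2 = D1^-1 * v z1 + D2^-1 * v z2 + D3^-1 * v z3].
Proof.
rewrite /= !inE !negb_or => /andP [/andP [z12 z13] /andP [z23 _]].
have [d12 d13 d23] : [/\ z1 - z2 != 0, z1 - z3 != 0 & z2 - z3 != 0].
  by rewrite !subr_eq0.
have [d21 d31 d32] : [/\ z2 - z1 != 0, z3 - z1 != 0 & z3 - z2 != 0].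
  by rewrite !subr_eq0; split; rewrite eq_sym.
by split; field; rewrite d12 d13 d23 d21 d31 d32.
Qed.

Lemma norm_lin3_le (F : numDomainType) (a1 a2 a3 b1 b2 b3 B : F) :
  `|b1| <= B -> `|b2| <= B -> `|b3| <= B ->
  `|a1 * b1 + a2 * b2 + a3 * b3| <= (`|a1| + `|a2| + `|a3|) * B.
Proof.
move=> b1B b2B b3B; rewrite !mulrDl.
apply: le_trans (ler_normD _ _) _; apply: lerD; last by rewrite normrM ler_wpM2l.
apply: le_trans (ler_normD _ _) _.
by apply: lerD; rewrite normrM ler_wpM2l.
Qed.

Lemma coef_bound_of_values (F : numFieldType) (z1 z2 z3 : F) :
  uniq [:: z1; z2; z3] ->
  exists M : F, 0 <= M /\ forall (f : {poly rat}) (B : F), inK f ->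
    `|(map_poly ratr f).[z1]| <= B -> `|(map_poly ratr f).[z2]| <= B ->
    `|(map_poly ratr f).[z3]| <= B ->
    forall k, (k < 3)%N -> `|ratr f`_k : F| <= M * B.
Proof.
move=> uniq_z.
set D1 := (z1 - z2) * (z1 - z3); set D2 := (z2 - z1) * (z2 - z3).
set D3 := (z3 - z1) * (z3 - z2).
set M0 := `|z2 * z3 / D1| + `|z1 * z3 / D2| + `|z1 * z2 / D3|.
set M1 := `|- (z2 + z3) / D1| + `|- (z1 + z3) / D2| + `|- (z1 + z2) / D3|.
set M2 := `|D1^-1| + `|D2^-1| + `|D3^-1|.
have [M0_ge0 M1_ge0 M2_ge0] : [/\ 0 <= M0, 0 <= M1 & 0 <= M2].
  by split; rewrite !addr_ge0.
exists (M0 + M1 + M2); split; first by rewrite !addr_ge0.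
move=> f B f_small v1 v2 v3 k k_lt3; have B_ge0 := le_trans (normr_ge0 _) v1.
rewrite (quad_coef f_small) map_quad !horner_quad in v1 v2 v3.
have [E0 E1 E2] := lagrange3 (ratr f`_0) (ratr f`_1) (ratr f`_2) uniq_z.
rewrite -!mulNr -/D1 -/D2 -/D3 in E0 E1 E2.
case: k k_lt3 => [|[|[|]]] // _; [rewrite E0 | rewrite E1 | rewrite E2].
all: apply: le_trans (norm_lin3_le _ _ _ v1 v2 v3) _; rewrite ler_wpM2r //.
- by rewrite -/M0 -addrA lerDl addr_ge0.
- by rewrite -/M1 addrAC lerDr addr_ge0.
- by rewrite -/M2 lerDr addr_ge0.
Qed.

Definition zrange (K : nat) : seq int := [seq n%:Z - K%:Z | n <- iota 0 (2 * K + 1)].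

Lemma size_zrange K : size (zrange K) = (2 * K + 1)%N.
Proof. by rewrite size_map size_iota. Qed.

Lemma mem_zrange K n : (n \in zrange K) = (`|n| <= K)%N.
Proof.
apply/mapP/idP => [[i i_iota ->] | n_small].
  by move: i_iota; rewrite mem_iota; lia.
by exists (absz (n + K%:Z)); rewrite ?mem_iota; lia.
Qed.

Definition rat_grid (D : int) (N : nat) : seq rat :=
  [seq n%:~R / D%:~R | n <- zrange N].

Lemma mem_rat_grid (D : int) (N : nat) (q : rat) :
  0 < D -> D%:~R * q \is a Num.int -> `|D%:~R * q| <= N%:R -> q \in rat_grid D N.
Proof.
move=> D_gt0 Dq_int Dq_small; apply/mapP; exists (Num.floor (D%:~R * q)).
  by rewrite mem_zrange -(ler_nat rat) natr_absz intr_norm floorK.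
by rewrite floorK // mulrAC divff ?mul1r // intr_eq0 gt_eqF.
Qed.

Lemma card_is_exists (P : {poly rat} -> Prop) (L : seq {poly rat}) :
  (forall f, P f -> f \in L) -> exists n, card_is P n.
Proof.
move=> PL; exists (size (undup [seq f <- L | `[< P f >]])).
exists (undup [seq f <- L | `[< P f >]]); split; first exact: undup_uniq.
split => // f; rewrite mem_undup mem_filter.
by split => [/andP [/asboolP] // | Pf]; rewrite PL // andbT; apply/asboolP.
Qed.

Section Finiteness.
Local Open Scope complex_scope.
Variable R : realType.

Lemma abs_inf_lt_coef_bound (p : {poly rat}) : cubic_poly p ->
  exists M : R, forall f (Y : R), inK f -> abs_inf_lt p f Y ->
    forall k, (k < 3)%N -> `|ratr f`_k : R| <= M * Y.
Proof.
move=> cubic_p; have [z1 [z2 [z3 [Ep uniq_z]]]] := cubic_poly_factor (R[i]) cubic_p.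
have [M [M_ge0 bound]] := coef_bound_of_values uniq_z.
exists (complex.Re M) => f Y f_small f_lt k k_lt3.
have le_Y z : z \in [:: z1; z2; z3] -> `|(map_poly ratr f).[z]| <= Y%:C.
  by move=> z_root; apply/ltW/f_lt; rewrite Ep root_prod_XsubC.
rewrite -normc_real_complex -lec_normc (fmorph_rat (real_complex R)).
rewrite rmorphM /= RRe_real ?ger0_real //; apply: bound => //; apply: le_Y.
all: by rewrite !inE eqxx ?orbT.
Qed.

Lemma S_K_finite (p : {poly rat}) (d : int) (Y : R) :
  cubic_poly p -> is_disc p d -> exists n, card_is (S_K p Y) n.
Proof.
move=> cubic_p disc_d.
have [D [D_gt0 D_den]] := in_OK_common_denominator disc_d.
have [M M_bound] := abs_inf_lt_coef_bound cubic_p.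
set Q := rat_grid D (Num.truncn (D%:~R * (M * Y))).+1.
apply: (@card_is_exists _
  [seq quad a bc.1 bc.2 | a <- Q, bc <- [seq (b, c) | b <- Q, c <- Q]]).
move=> f [OK_f [_ [_ f_lt]]].
have coef_Q k : (k < 3)%N -> f`_k \in Q.
  move=> k_lt3; apply: mem_rat_grid => //; first exact: D_den.
  rewrite -(ler_rat R) rmorph_nat ratr_norm rmorphM /= ratr_int normrM.
  rewrite gtr0_norm ?ltr0z // (le_trans _ (ltW (truncnS_gt _))) //.
  by rewrite ler_wpM2l ?ler0z ?(ltW D_gt0) // (M_bound _ _ OK_f.1 f_lt).
rewrite (quad_coef OK_f.1).
apply: (allpairs_f (fun a bc => quad a bc.1 bc.2) (coef_Q 0%N isT) (y := (f`_1, f`_2))).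
exact: allpairs_f (coef_Q 1%N isT) (coef_Q 2%N isT).
Qed.

End Finiteness.

Lemma size_le_label_fibers (T U : eqType) (L : T -> U) (s : seq T)
    (labels : seq U) (k : nat) :
  {in s, forall x, L x \in labels} -> (forall l, count (fun x => L x == l) s <= k)%N ->
  (size s <= size labels * k)%N.
Proof.
move=> s_labels fiber_k.
have -> : size s = count (fun x => L x \in labels) s.
  by rewrite -count_predT; apply: eq_in_count => x /s_labels ->.
elim: labels {s_labels} => [|l labels IH] /=; first by rewrite count_pred0.
rewrite mulSn (leq_trans _ (leq_add (fiber_k l) IH)) //.
rewrite -[X in (X <= _)%N]addn0 -(count_predUI (fun x => L x == l)).
by rewrite leq_add //; apply: sub_count => x /=; rewrite inE.
Qed.

Lemma count_fiber_le (V : zmodType) (U : eqType) (L : V -> U) (s t : seq V) (l : U) :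
  uniq s -> {in s &, forall f g, L f = L g -> f = g \/ f - g \in t} ->
  (count (fun x => L x == l) s <= (size t).+1)%N.
Proof.
move=> uniq_s close; rewrite -size_filter.
case E : [seq x <- s | L x == l] => [|g F] //.
have fiber x : x \in g :: F -> x \in s /\ L x = l.
  by rewrite -E mem_filter => /andP [/eqP].
have [g_s Lg] := fiber g (mem_head _ _).
rewrite -(size_map (fun x => x - g)) -/(size (0 :: t)).
apply: uniq_leq_size.
  by rewrite map_inj_uniq; [rewrite -E filter_uniq | exact: addIr].
move=> _ /mapP [x /fiber [x_s Lx] ->].
case: (close x g x_s g_s) => [|->|xg]; rewrite ?Lx ?Lg //.
  by rewrite subrr mem_head.
by rewrite inE xg orbT.
Qed.

Lemma floor_div_eq_dist_lt (R : realType) (x y s : R) :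
  0 < s -> Num.floor (x / s) = Num.floor (y / s) -> `|x - y| < s.
Proof.
move=> s_gt0 floor_eq.
have /andP [x_ge x_lt] := floor_itv (x / s).
have /andP [y_ge y_lt] := floor_itv (y / s).
rewrite floor_eq intrD in x_ge x_lt; rewrite intrD in y_lt.
have : `|x / s - y / s| < 1 by rewrite ltr_norml; apply/andP; split; lra.
by rewrite -mulrBl normrM [`|s^-1|]gtr0_norm ?invr_gt0 // ltr_pdivrMr // mul1r.
Qed.

Lemma floor_div_mem_zrange (R : realType) (x s : R) (K : nat) :
  0 < s -> `|x| < K%:R * s -> Num.floor (x / s) \in zrange K.
Proof.
move=> s_gt0 x_lt.
have : `|x / s| < K%:R by rewrite normf_div [`|s|]gtr0_norm // ltr_pdivrMr.
rewrite ltr_norml mem_zrange => /andP [lo hi].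
have : - (K%:Z) <= Num.floor (x / s) by rewrite floor_ge_int rmorphN ltW.
have : Num.floor (x / s) < K%:Z by rewrite floor_lt_int.
lia.
Qed.

Lemma S_KB (R : realType) (p f g : {poly rat}) (Y r : R) :
  cubic_poly p -> S_K p Y f -> S_K p Y g -> f != g -> traceK p f = traceK p g ->
  abs_inf_lt p (f - g) r -> S_K p r (f - g).
Proof.
move=> cubic_p [OK_f _] [OK_g _] fg tr_fg fg_lt.
have [monic_p [size_p _]] := cubic_p.
have tr0 : traceK p (f - g) = 0 by rewrite traceKB tr_fg subrr.
split; first exact: in_OKB.
split; last by split => //; right; left.
move=> [k Ek]; move: tr0; rewrite Ek traceK_polyC // => /eqP.
rewrite mulf_eq0 /= intr_eq0 => /eqP k0.
by move/eqP: Ek; rewrite k0 /= polyC0 subr_eq0 (negPf fg).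
Qed.

Lemma S_K_card_le (R : realType) (p : {poly rat}) (Y r : R) (K n m : nat) :
  cubic_poly p -> 0 < r -> Y <= K%:R * (r / 2) ->
  card_is (S_K p Y) n -> card_is (S_K p r) m ->
  (n <= 3 * (2 * K + 1) ^ 2 * m.+1)%N.
Proof.
move=> cubic_p r_gt0 Y_le [sY [uniq_sY [sY_S <-]]] [sr [_ [sr_S <-]]].
have [cx [cy [cxB cyB coord_lt coord_small]]] := trace_coordinates R cubic_p.
set s := r / 2; have s_gt0 : 0 < s by rewrite divr_gt0.
pose L f := (traceK p f, (Num.floor (cx f / s), Num.floor (cy f / s))).
pose labels := [seq (t, ij) | t <- [:: -1; 0; 1 : rat],
                  ij <- [seq (i, j) | i <- zrange K, j <- zrange K]].
have -> : (3 * (2 * K + 1) ^ 2 = size labels)%N.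
  by rewrite !size_allpairs size_zrange expnS expn1.
apply: (@size_le_label_fibers _ _ L).
  move=> f /sY_S [_ [_ [red_f /coord_lt [cx_lt cy_lt]]]].
  apply: allpairs_f; first by case: red_f => [|[|]] ->; rewrite !inE eqxx ?orbT.
  by apply: allpairs_f; apply: floor_div_mem_zrange => //; apply: lt_le_trans Y_le.
move=> l; apply: count_fiber_le => // f g /sY_S Sf /sY_S Sg [tr_fg fx fy].
have [-> | fg] := eqVneq f g; [by left | right].
apply/sr_S/(S_KB cubic_p Sf Sg fg tr_fg).
have -> : r = 2 * s by rewrite /s mulrC divfK ?pnatr_eq0.
case: Sf Sg => [OK_f _] [OK_g _].
apply: coord_small; first exact: (in_OKB cubic_p OK_f OK_g).1.
- by rewrite traceKB tr_fg subrr.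
- by rewrite cxB; apply: floor_div_eq_dist_lt.
- by rewrite cyB; apply: floor_div_eq_dist_lt.
Qed.

Lemma S_K_ratio_le (R : realType) (p : {poly rat}) (Y r : R) (n m : nat) :
  cubic_poly p -> 0 < r <= Y -> card_is (S_K p Y) n -> card_is (S_K p r) m ->
  (0 < m)%N -> n%:R / m%:R <= 294 * (Y / r) ^+ 2.
Proof.
move=> cubic_p /andP [r_gt0 r_le_Y] card_n card_m m_gt0.
set t := Y / r; have t_ge1 : 1 <= t by rewrite ler_pdivlMr // mul1r.
set K := (Num.truncn (2 * t)).+1.
have K_lt : 2 * t < K%:R by exact: truncnS_gt.
have K_le : K%:R <= 2 * t + 1.
  by rewrite /K -natr1 lerD2r truncn_le mulr_ge0 // (le_trans ler01).
have Y_le : Y <= K%:R * (r / 2).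
  have -> : Y = 2 * t * (r / 2) by rewrite /t; field; exact: lt0r_neq0.
  by rewrite ler_wpM2r ?divr_ge0 ?(ltW r_gt0) ?(ltW K_lt).
have := S_K_card_le cubic_p r_gt0 Y_le card_n card_m.
rewrite -(ler_nat R) natrM natrM natrX [(2 * K + 1)%:R]natrD natrM [m.+1%:R]mulrSr.
move=> n_le.
have m_ge1 : 1 <= m%:R :> R by rewrite ler1n.
set A := 2 * K%:R + 1 : R.
have A_le : A <= 7 * t by rewrite /A; lra.
have A_ge0 : 0 <= A by rewrite /A; lra.
have A2_le : A ^+ 2 <= 49 * t ^+ 2 by nra.
rewrite ler_pdivrMr ?ltr0n //; rewrite -/A in n_le.
have Am : A ^+ 2 * (m%:R + 1) <= A ^+ 2 * (2 * m%:R).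
  by rewrite ler_wpM2l ?sqr_ge0 //; lra.
nra.
Qed.

Theorem lemma3p7 (R : realType) (C : R) :
  1 < C ->
  (forall (Z : R) (p : {poly rat}) (d : int), 0 < Z -> cubic_poly p ->
     is_disc p d -> (`|d|%:~R : R) <= Z ->
     exists f, S_K p (C * Z `^ (1/4)) f) ->
  exists c : R, 0 < c /\
    forall (X Y : R) (p : {poly rat}), 0 < X -> 0 < Y ->
      C * X `^ (1/4) <= Y -> cubic_poly p ->
      (exists d : int, is_disc p d /\ X / 2 <= (`|d|%:~R : R) <= X) ->
      exists n m : nat,
        card_is (S_K p Y) n /\ card_is (S_K p (C * X `^ (1/4))) m /\
        (n%:R / m%:R : R) <= c * (Y ^+ 2 / X `^ (1/2)).
Proof.
move=> C_gt1 S_K_nonempty; exists 294; split => // X Y p X_gt0 Y_gt0 r_le_Y cubic_p.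
move=> [d [disc_d /andP [_ d_le_X]]].
set r := C * X `^ (1/4).
have r_gt0 : 0 < r by rewrite mulr_gt0 ?powR_gt0 // (lt_trans ltr01).
have [n card_n] := S_K_finite Y cubic_p disc_d.
have [m card_m] := S_K_finite r cubic_p disc_d.
exists n, m; do 2!split => //.
have m_gt0 : (0 < m)%N.
  have [f Sf] := S_K_nonempty X p d X_gt0 cubic_p disc_d d_le_X.
  have [s [_ [s_S <-]]] := card_m.
  by case: s s_S => // /(_ f) [_ /(_ Sf)].
apply: le_trans (S_K_ratio_le cubic_p _ card_n card_m m_gt0) _; first by rewrite r_gt0.
rewrite ler_pM2l // expr_div_n ler_pM2l ?exprn_gt0 //.
rewrite lef_pV2 ?posrE ?exprn_gt0 ?powR_gt0 //.
have -> : r ^+ 2 = C ^+ 2 * X `^ (1/2).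
  rewrite exprMn -[X `^ _ ^+ 2]powR_mulrn ?powR_ge0 // -powRrM.
  by congr (_ * X `^ _); field.
by rewrite ler_peMl ?powR_ge0 // exprn_ege1 ?ltW.
Qed.
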